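(* Let $G=\mathrm{SL}(2,F)$, $x\in\mathcal B(G)$ a vertex, $d>0$, and $\Gamma\in\mathfrak g^*_{x,-d}\setminus\mathfrak g^*_{x,-d+}$ such that $\Gamma+\mathfrak g^*_{x,-d+}$ contains a nilpotent element. Then there is a unique chamber $\mathcal C=\mathcal C_\Gamma$ of $\mathcal B(G)$ adjacent to $x$ such that $\Gamma\in\mathfrak g^*_{x,-d}\cap\mathfrak g^*_{z,-d+}$ for every $z\in\mathcal C$; it depends only on the coset $\Gamma+\mathfrak g^*_{x,-d+}$. Moreover, for $z\in\mathcal C$, $\mathrm{Cent}_{G_x}(\Gamma)=\mathrm{Cent}_{G_z}(\Gamma)$.
   Context: $F$ is a nonarchimedean local field with residual characteristic $p\geq3$; $G=\mathrm{SL}(2,F)$, $\mathfrak g=\mathfrak{sl}(2,F)\cong\mathfrak g^*$ via the trace form, $G$ acting by conjugation. $\mathcal B(G)$ is the Bruhat–Tits tree; for $y\in\mathcal B(G)$, $G_y$ is the stabilizer of $y$ and $\mathfrak g^*_{y,r}$ ($r\in\mathbb R$) are the Moy–Prasad lattices, $\mathfrak g^*_{y,r+}=\bigcup_{s>r}\mathfrak g^*_{y,s}$. *)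

From HB Require Import structures.
From mathcomp Require Import all_boot all_order all_algebra.
From mathcomp Require Import reals.
Set Implicit Arguments. Unset Strict Implicit. Unset Printing Implicit Defensive.
Import Order.TTheory GRing.Theory Num.Theory.
Local Open Scope ring_scope.

Section Defs.
Variable F : fieldType.
Variable val : F -> int.   (* the normalized discrete valuation; its value at 0 is irrelevant *)

Definition in_OF (a : F) : Prop := a = 0 \/ 0 <= val a.
Definition in_PF (a : F) : Prop := a = 0 \/ 1 <= val a.

Definition nonarch_local_field (p : nat) : Prop :=
  [/\ (forall a b, a != 0 -> b != 0 -> val (a * b) = val a + val b),
      (forall a b, a != 0 -> b != 0 -> a + b != 0 ->
          Num.min (val a) (val b) <= val (a + b)),
      (exists w : F, w != 0 /\ val w = 1) &
      [/\ 
      (forall u : nat -> F,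
         (forall N : int, exists M, forall m n, (M <= m)%N -> (M <= n)%N ->
              u m = u n \/ N <= val (u m - u n)) ->
         exists l, forall N : int, exists M, forall n, (M <= n)%N ->
              u n = l \/ N <= val (u n - l)),
      (exists s : seq F, (forall b, b \in s -> in_OF b) /\
         forall a, in_OF a -> exists2 b, b \in s & in_PF (a - b)) &
      [/\ prime p, (3 <= p)%N & in_PF (p%:R)] ] ].

Variable R : realType.

(* The splittable norm  x1 e1 + x2 e2 |-> min(val x1 + c1, val x2 + c2),
   where the columns e1, e2 of B form a basis of F^2 (valid on v != 0). *)
Definition nrm (B : 'M[F]_2) (c1 c2 : R) (v : 'cV[F]_2) : R :=
  let w := invmx B *m v in
  let a := w 0 0 in let b := w 1 0 in
  if a == 0 then (val b)%:~R + c2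
  else if b == 0 then (val a)%:~R + c1
  else Num.min ((val a)%:~R + c1) ((val b)%:~R + c2).

(* Points of the Bruhat-Tits tree B(SL(2,F)) are homothety classes of
   splittable norms on F^2 (Goldman-Iwahori); we represent a point by a
   norm alpha (only its values on nonzero vectors matter), and all
   predicates below are invariant under homothety alpha ~ alpha + c. *)
Definition homot (alpha beta : 'cV[F]_2 -> R) : Prop :=
  exists c : R, forall v, v != 0 -> alpha v = beta v + c.

Definition is_point (alpha : 'cV[F]_2 -> R) : Prop :=
  exists B c1 c2, B \in unitmx /\ forall v, v != 0 -> alpha v = nrm B c1 c2 v.

(* vertices = classes of lattice norms *)
Definition is_vertex (alpha : 'cV[F]_2 -> R) : Prop :=
  exists B, B \in unitmx /\ homot alpha (nrm B 0 0).

(* the (open) chamber with endpoints the vertices [nrm B 0 0], [nrm B 0 1] *)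
Definition chamber_of (B : 'M[F]_2) (alpha : 'cV[F]_2 -> R) : Prop :=
  exists t : R, 0 < t < 1 /\ homot alpha (nrm B 0 t).

Definition is_chamber (C : ('cV[F]_2 -> R) -> Prop) : Prop :=
  exists B, B \in unitmx /\ forall alpha, C alpha <-> chamber_of B alpha.

Definition adjacent (C : ('cV[F]_2 -> R) -> Prop) (x : 'cV[F]_2 -> R) : Prop :=
  exists B, [/\ B \in unitmx, (forall alpha, C alpha <-> chamber_of B alpha)
             & homot x (nrm B 0 0) \/ homot x (nrm B 0 1)].

Definition in_sl2 (X : 'M[F]_2) : Prop := \tr X = 0.

Definition MP (alpha : 'cV[F]_2 -> R) (r : R) (X : 'M[F]_2) : Prop :=
  in_sl2 X /\ forall v, v != 0 -> X *m v != 0 -> alpha v + r <= alpha (X *m v).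
Definition MP_plus (alpha : 'cV[F]_2 -> R) (r : R) (X : 'M[F]_2) : Prop :=
  exists2 s : R, r < s & MP alpha s X.

(* dual Moy-Prasad lattices g*_{x,r}, g* identified with g via the trace form:
   g*_{x,r} = { Gamma | tr(Gamma Y) in P_F for all Y in g_{x,(-r)+} } *)
Definition MPd (alpha : 'cV[F]_2 -> R) (r : R) (G : 'M[F]_2) : Prop :=
  in_sl2 G /\ forall Y, MP_plus alpha (- r) Y -> in_PF (\tr (G *m Y)).
Definition MPd_plus (alpha : 'cV[F]_2 -> R) (r : R) (G : 'M[F]_2) : Prop :=
  exists2 s : R, r < s & MPd alpha s G.

Definition in_stab (alpha : 'cV[F]_2 -> R) (g : 'M[F]_2) : Prop :=
  \det g = 1 /\ homot (fun v => alpha (g *m v)) alpha.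

(* g in Cent_{G_x}(Gamma) (coadjoint action = conjugation via trace form) *)
Definition in_cent (alpha : 'cV[F]_2 -> R) (G : 'M[F]_2) (g : 'M[F]_2) : Prop :=
  in_stab alpha g /\ g *m G *m invmx g = G.

Definition nilpotent_sl2 (N : 'M[F]_2) : Prop :=
  in_sl2 N /\ exists k : nat, N ^+ k = 0.

End Defs.

From HB Require Import structures.
From mathcomp Require Import all_boot all_order all_algebra.
From mathcomp Require Import reals.
From mathcomp Require Import ring lra zify.
Set Implicit Arguments. Unset Strict Implicit. Unset Printing Implicit Defensive.
Import Order.TTheory GRing.Theory Num.Theory.
Local Open Scope ring_scope.

(* Choose a frame B with x = [nrm B 0 0]; the edges at x are then the segments
   t |-> [nrm B 0 t], and in the coordinates of B the dual Moy-Prasad lattices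
   become valuation bounds on the entries: Gam is in g*_{x,-d} iff all entries
   of B^-1 Gam B have valuation >= -d, and Gam is in g*_{z,-d+} for z on the
   open edge iff moreover its two top entries have valuation >= 1 - d.  At a
   vertex these lattices only jump at integers, so d is an integer, and since
   Gam is not in g*_{x,-d+}, the bottom-left entry of Gam in such an "adapted"
   frame has valuation <= -d.  A frame in which the nilpotent element of the
   coset is strictly lower triangular is adapted.  If h in GL2(O)
   intertwines Gam in two adapted frames, the (0,0) entry of the intertwining
   relation forces h_01 in P, i.e. h lies in the Iwahori subgroup, which fixes
   the whole edge: this gives the uniqueness of the chamber and, applied to
   centralising h in SL2, the equality of the centralisers. *)

Section BruhatTitsTree.
Variables (F : fieldType) (val : F -> int).
Hypothesis valM : forall {a b : F}, a != 0 -> b != 0 -> val (a * b) = val a + val b.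
Hypothesis val_addr : forall {a b : F}, a != 0 -> b != 0 -> a + b != 0 ->
  Num.min (val a) (val b) <= val (a + b).

Lemma val1 : val 1 = 0.
Proof. have := @valM 1 1 (oner_neq0 _) (oner_neq0 _); rewrite mulr1 => h; lia. Qed.

Lemma valN a : val (- a) = val a.
Proof.
have N10 : (-1 : F) != 0 by rewrite oppr_eq0 oner_neq0.
have valN1 : val (-1) = 0.
  by have := @valM (-1) (-1) N10 N10; rewrite mulrNN mulr1 val1 => h; lia.
have [->|a0] := eqVneq a 0; first by rewrite oppr0.
by rewrite -mulN1r valM // valN1 add0r.
Qed.

Lemma valV a : a != 0 -> val a^-1 = - val a.
Proof.
move=> a0; have := @valM a a^-1 a0 (invr_neq0 a0); rewrite divff // val1 => h; lia.
Qed.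

Section ValuationBounds.
Variable R : realDomainType.

Definition val_ge (r : R) (a : F) := a = 0 \/ r <= (val a)%:~R.

Lemma val_ge_le r r' a : r' <= r -> val_ge r a -> val_ge r' a.
Proof. by move=> h [->|h2]; [left|right; apply: le_trans h2]. Qed.

Lemma val_geN r a : val_ge r a -> val_ge r (- a).
Proof. by case=> [->|h]; [left; rewrite oppr0|right; rewrite valN]. Qed.

Lemma val_geD r a b : val_ge r a -> val_ge r b -> val_ge r (a + b).
Proof.
case=> [->|ha]; first by rewrite add0r.
case=> [->|hb]; first by rewrite addr0; right.
have [->|a0] := eqVneq a 0; first by rewrite add0r; right.
have [->|b0] := eqVneq b 0; first by rewrite addr0; right.
have [|ab0] := eqVneq (a + b) 0; first by left.
right; have := val_addr a0 b0 ab0; rewrite ge_min => /orP[] h.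
- by apply: le_trans ha _; rewrite ler_int.
- by apply: le_trans hb _; rewrite ler_int.
Qed.

Lemma val_geB r a b : val_ge r a -> val_ge r b -> val_ge r (a - b).
Proof. by move=> ha hb; apply/val_geD/val_geN. Qed.

Lemma val_geM r s a b : val_ge r a -> val_ge s b -> val_ge (r + s) (a * b).
Proof.
case=> [->|ha]; first by rewrite mul0r; left.
case=> [->|hb]; first by rewrite mulr0; left.
have [->|a0] := eqVneq a 0; first by rewrite mul0r; left.
have [->|b0] := eqVneq b 0; first by rewrite mulr0; left.
by right; rewrite valM // intrD lerD.
Qed.

Lemma val_ge_divr r a b : b != 0 -> val_ge r a -> val_ge (r - (val b)%:~R) (a / b).
Proof.
move=> b0 ha; have := val_geM ha (or_intror (lexx (val b^-1)%:~R)).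
by rewrite valV // intrN.
Qed.

Lemma val_ge1 r : r <= 0 -> val_ge r 1.
Proof. by right; rewrite val1. Qed.

Lemma val_ge_int (n : int) (r : R) a : n%:~R - 1 < r -> val_ge r a -> val_ge n%:~R a.
Proof.
move=> hr [->|ha]; [by left|right].
have : ((n - 1)%:~R : R) < (val a)%:~R by rewrite intrB; apply: lt_le_trans ha.
by rewrite ltr_int ler_int; lia.
Qed.

Lemma val_ge_PF r a : 0 < r -> val_ge r a -> in_PF val a.
Proof.
move=> r0 /(@val_ge_int 1) [|->|h]; [lra|by left|right].
by rewrite -(ler_int R).
Qed.

Lemma PF_val_ge a : in_PF val a -> val_ge 1 a.
Proof. by case=> [->|h]; [left|right; rewrite -(ler_int R) in h]. Qed.

Lemma val_le_of_not_ge (D : int) a : ~ val_ge (1 - D%:~R) a ->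
  a != 0 /\ (val a)%:~R <= - D%:~R :> R.
Proof.
have [->|a0] := eqVneq a 0; first by case; left.
move=> ha; split => //; rewrite leNgt; apply/negP => hlt; apply: ha; right.
have -> : (1 : R) - D%:~R = (1 - D)%:~R by rewrite intrB.
by rewrite -intrN ltr_int in hlt; rewrite ler_int; lia.
Qed.

Lemma val_nat_ge0 n : val_ge 0 (n%:R : F).
Proof.
elim: n => [|n IH]; first by left.
by rewrite mulrS; apply/val_geD/IH/val_ge1.
Qed.

End ValuationBounds.

(* p = 1 + 2 (p %/ 2), so 2 in P would put 1 in P. *)
Lemma two_unit p : prime p -> (3 <= p)%N -> in_PF val (p%:R : F) ->
  (2 : F) != 0 /\ val 2 = 0.
Proof.
move=> pp p3 pPF.
have podd : odd p by case: (even_prime pp) => // p2; rewrite p2 in p3.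
have p_half : (p%:R : F) = 1 + 2 * (p./2)%:R.
  by rewrite -{1}(odd_double_half p) podd natrD -muln2 natrM mulrC.
have two_nPF : ~ val_ge (1 : int) (2 : F).
  move=> h2; have : val_ge (1 : int) (p%:R - 2 * (p./2)%:R : F).
    apply/val_geB; first exact: PF_val_ge.
    by apply: val_ge_le (val_geM h2 (val_nat_ge0 _ _)); rewrite addr0.
  by rewrite p_half addrK => -[/eqP|]; rewrite ?oner_eq0 // val1.
have [two0|two0] := eqVneq (2 : F) 0; first by case: two_nPF; left.
split => //; case: (val_nat_ge0 int 2) => [/eqP|]; rewrite ?(negbTE two0) // intz.
move=> v2_ge0; suff : ~ 1 <= val 2 by lia.
by move=> h; apply: two_nPF; right; rewrite intz.
Qed.

Variable R : realType.


Lemma big_ord2 (f : 'I_2 -> F) : \sum_(i < 2) f i = f 0 + f 1.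
Proof. by rewrite big_ord_recl big_ord1; congr (f _ + f _); apply: val_inj. Qed.

Lemma mulmx2E m n (A : 'M[F]_(m, 2)) (B : 'M[F]_(2, n)) i j :
  (A *m B) i j = A i 0 * B 0 j + A i 1 * B 1 j.
Proof. by rewrite mxE big_ord2. Qed.

Lemma mxtrace2E (A : 'M[F]_2) : \tr A = A 0 0 + A 1 1.
Proof. by rewrite /mxtrace big_ord2. Qed.

Lemma det2E (A : 'M[F]_2) : \det A = A 0 0 * A 1 1 - A 0 1 * A 1 0.
Proof.
rewrite (expand_det_row _ 0) big_ord2 /cofactor !det_mx11 !mxE /=.
have -> : lift (0 : 'I_2) (0 : 'I_1) = 1 by apply: val_inj.
have -> : lift (1 : 'I_2) (0 : 'I_1) = 0 by apply: val_inj.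
by rewrite expr0 expr1; ring.
Qed.

Lemma ord2P (i : 'I_2) : i = 0 \/ i = 1.
Proof. by case: i => [[|[|//]]] Hi; [left|right]; apply: val_inj. Qed.

Lemma matrix2P (A B : 'M[F]_2) : A 0 0 = B 0 0 -> A 0 1 = B 0 1 ->
  A 1 0 = B 1 0 -> A 1 1 = B 1 1 -> A = B.
Proof.
move=> h00 h01 h10 h11; apply/matrixP => i j.
by case: (ord2P i) => ->; case: (ord2P j) => ->.
Qed.

Lemma col2_eq0 (w : 'cV[F]_2) : w 0 0 = 0 -> w 1 0 = 0 -> w = 0.
Proof.
move=> h0 h1; apply/matrixP => i j; rewrite ord1 mxE.
by case: (ord2P i) => ->.
Qed.

Lemma mxtrace0_11 (A : 'M[F]_2) : \tr A = 0 -> A 1 1 = - A 0 0.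
Proof. by rewrite mxtrace2E => /eqP; rewrite addrC addr_eq0 => /eqP. Qed.

Lemma det_expr (A : 'M[F]_2) k : \det (A ^+ k) = \det A ^+ k.
Proof. by elim: k => [|k IH]; rewrite ?det1 // !exprS detM IH. Qed.

Definition mx22 (a b c e : F) : 'M[F]_2 :=
  \matrix_(i < 2, j < 2) if i == 0 then (if j == 0 then a else b)
                         else (if j == 0 then c else e).

Lemma mulmx_unit_neq0 (B : 'M[F]_2) (w : 'cV[F]_2) :
  B \in unitmx -> w != 0 -> B *m w != 0.
Proof.
move=> Bu; apply: contraNneq => Bw0.
by rewrite -(mulKmx Bu w) Bw0 mulmx0.
Qed.

Lemma invmx_left (A A' : 'M[F]_2) : A' *m A = 1%:M -> invmx A = A'.
Proof.
move=> AA'; have [A'u Au] := mulmx1_unit AA'.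
by rewrite -[RHS]mulmx1 -(mulmxV Au) mulmxA AA' mul1mx.
Qed.

Lemma invmxM (A B : 'M[F]_2) : A \in unitmx -> B \in unitmx ->
  invmx (A *m B) = invmx B *m invmx A.
Proof.
move=> Au Bu; apply: invmx_left.
by rewrite mulmxA -(mulmxA _ _ A) (mulVmx Au) mulmx1 (mulVmx Bu).
Qed.

Definition mxconj (B X : 'M[F]_2) := invmx B *m X *m B.

Lemma mxconjM B X Y : B \in unitmx -> mxconj B (X *m Y) = mxconj B X *m mxconj B Y.
Proof.
move=> Bu; rewrite /mxconj !mulmxA; congr (_ *m _).
by rewrite -!mulmxA (mulmxA B) (mulmxV Bu) mul1mx.
Qed.

Lemma mxconjB B X Y : mxconj B (X - Y) = mxconj B X - mxconj B Y.
Proof. by rewrite /mxconj mulmxBr mulmxBl. Qed.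

Lemma mxconjK B Y : B \in unitmx -> mxconj B (B *m Y *m invmx B) = Y.
Proof. by move=> Bu; rewrite /mxconj !mulmxA (mulVmx Bu) mul1mx mulmxKV. Qed.

Lemma mxconj_mulmx B k X : B \in unitmx -> k \in unitmx ->
  mxconj (B *m k) X = invmx k *m mxconj B X *m k.
Proof. by move=> Bu ku; rewrite /mxconj invmxM // !mulmxA. Qed.

Lemma mxtrace_conj B X : B \in unitmx -> \tr (mxconj B X) = \tr X.
Proof. by move=> Bu; rewrite /mxconj mxtrace_mulC mulmxA (mulmxV Bu) mul1mx. Qed.

Lemma det_conj B X : B \in unitmx -> \det (mxconj B X) = \det X.
Proof.
by move=> Bu; rewrite /mxconj !det_mulmx det_inv mulrC mulrA mulrV ?mul1r.
Qed.

Definition mx_val_ge (r : R) (A : 'M[F]_2) := forall i j, val_ge r (A i j).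

Lemma mx_val_geM r s A B : mx_val_ge r A -> mx_val_ge s B -> mx_val_ge (r + s) (A *m B).
Proof. by move=> hA hB i j; rewrite mulmx2E; apply: val_geD; apply: val_geM. Qed.

Lemma mx_val_geP r (A : 'M[F]_2) : val_ge r (A 0 0) -> val_ge r (A 0 1) ->
  val_ge r (A 1 0) -> val_ge r (A 1 1) -> mx_val_ge r A.
Proof. by move=> h00 h01 h10 h11 i j; case: (ord2P i) => ->; case: (ord2P j) => ->. Qed.

Definition snorm (t : R) (w : 'cV[F]_2) : R := nrm val 1%:M 0 t w.

Lemma nrm_frame B t v : nrm val B 0 t v = snorm t (invmx B *m v).
Proof. by rewrite /snorm /nrm invmx1 mul1mx. Qed.

Lemma snorm_ge t y w : w != 0 ->
  (y <= snorm t w <-> val_ge y (w 0 0) /\ val_ge (y - t) (w 1 0)).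
Proof.
move=> w0; rewrite /snorm /nrm invmx1 mul1mx /=.
have [a0|a0] := eqVneq (w 0 0) 0.
  have b0 : w 1 0 != 0 by apply: contraNneq w0 => b0; apply/eqP/col2_eq0.
  rewrite a0; split; first by move=> h; split; [left|right; lra].
  by case=> _ [b0'|h]; [rewrite b0' eqxx in b0|lra].
have [b0|b0] := eqVneq (w 1 0) 0.
  rewrite b0 addr0; split; first by move=> h; split; [right|left].
  by case=> [[a0'|//] _]; rewrite a0' eqxx in a0.
rewrite le_min addr0; split.
  by case/andP => h1 h2; split; right; lra.
case=> [[a0'|h1] [b0'|h2]]; rewrite ?a0' ?b0' ?eqxx // in a0 b0 *.
by apply/andP; split => //; lra.
Qed.

Lemma snorm_e1 t : snorm t (delta_mx 0 0) = 0.
Proof. by rewrite /snorm /nrm invmx1 mul1mx /= !mxE /= oner_eq0 eqxx val1 addr0. Qed.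

Lemma snorm_e2 t : snorm t (delta_mx 1 0) = t.
Proof. by rewrite /snorm /nrm invmx1 mul1mx /= !mxE /= eqxx val1 add0r. Qed.

Definition shift_bounds (t s : R) (Y : 'M[F]_2) := [/\ val_ge s (Y 0 0),
  val_ge (s + t) (Y 0 1), val_ge (s - t) (Y 1 0) & val_ge s (Y 1 1)].

Definition shifts_snorm (t s : R) (Y : 'M[F]_2) := forall w, w != 0 -> Y *m w != 0 ->
  snorm t w + s <= snorm t (Y *m w).

Lemma shifts_snormP t s Y : shifts_snorm t s Y <-> shift_bounds t s Y.
Proof.
split=> [hY|[h00 h01 h10 h11] w w0 Yw0].
  pose e j : 'cV[F]_2 := delta_mx j 0.
  have Ye i j : (Y *m e j) i 0 = Y i j.
    by case: (ord2P j) => ->; rewrite mulmx2E !mxE /=; ring.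
  have col_bounds j : val_ge (s + snorm t (e j)) (Y 0 j) /\
      val_ge (s + snorm t (e j) - t) (Y 1 j).
    have [Yj0|Yj0] := eqVneq (Y *m e j) 0.
      by rewrite -!Ye Yj0 !mxE; split; left.
    have ej0 : e j != 0.
      by apply/eqP => /matrixP/(_ j 0); rewrite !mxE !eqxx => /eqP; rewrite oner_eq0.
    by have := hY _ ej0 Yj0; rewrite addrC => /(snorm_ge _ _ Yj0); rewrite !Ye.
  have [c00 c10] := col_bounds 0; have [c01 c11] := col_bounds 1.
  rewrite snorm_e1 addr0 in c00 c10; rewrite snorm_e2 in c01 c11.
  by split=> //; apply: val_ge_le c11; lra.
have [g0 g1] := (snorm_ge t _ w0).1 (lexx _).
apply/(snorm_ge _ _ Yw0); rewrite !mulmx2E; split; apply: val_geD.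
- by apply: (val_ge_le _ (val_geM h00 g0)); lra.
- by apply: (val_ge_le _ (val_geM h01 g1)); lra.
- by apply: (val_ge_le _ (val_geM h10 g0)); lra.
- by apply: (val_ge_le _ (val_geM h11 g1)); lra.
Qed.

Lemma snorm_translateP t c h : h \in unitmx ->
  (forall w, w != 0 -> snorm t (h *m w) = snorm t w + c) <->
  shift_bounds t c h /\ shift_bounds t (- c) (invmx h).
Proof.
move=> hu; split=> [htr|[/shifts_snormP h1 /shifts_snormP h2] w w0].
  split; apply/shifts_snormP=> w w0 hw; first by rewrite htr // addrC.
  by have := htr _ hw; rewrite mulKVmx // => ->; lra.
have hw := mulmx_unit_neq0 hu w0.
by have := h1 _ w0 hw; have := h2 _ hw; rewrite mulKmx // => /(_ w0); lra.
Qed.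

Lemma homot_refl (a : 'cV[F]_2 -> R) : homot a a.
Proof. by exists 0 => v _; rewrite addr0. Qed.

Lemma homot_sym (a b : 'cV[F]_2 -> R) : homot a b -> homot b a.
Proof. by case=> c h; exists (- c) => v v0; rewrite h //; ring. Qed.

Lemma homot_trans (a b e : 'cV[F]_2 -> R) : homot a b -> homot b e -> homot a e.
Proof. by case=> c h [c' h']; exists (c' + c) => v v0; rewrite h // h' //; ring. Qed.

Lemma MP_homot (a b : 'cV[F]_2 -> R) r X : homot a b -> MP a r X -> MP b r X.
Proof.
case=> c h [trX hX]; split => // v v0 Xv0.
by have := hX v v0 Xv0; rewrite !h //; lra.
Qed.

Lemma MPd_homot (a b : 'cV[F]_2 -> R) r G :
  homot a b -> MPd val a r G -> MPd val b r G.
Proof.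
move=> hab [trG hG]; split => // Y [s hs hY]; apply: hG; exists s => //.
exact: MP_homot (homot_sym hab) hY.
Qed.

Lemma MP_frame B t r X : B \in unitmx ->
  MP (nrm val B 0 t) r X <-> in_sl2 X /\ shift_bounds t r (mxconj B X).
Proof.
move=> Bu; have conj_mul w : invmx B *m (X *m w) = mxconj B X *m (invmx B *m w).
  by rewrite /mxconj !mulmxA (mulmxK Bu).
split=> -[trX hX]; split => //.
  apply/shifts_snormP => w w0 Xw0; have Bw0 := mulmx_unit_neq0 Bu w0.
  have XBw0 : X *m (B *m w) != 0.
    by apply: contraNneq Xw0 => XBw; rewrite /mxconj -!mulmxA XBw mulmx0.
  by have := hX _ Bw0 XBw0; rewrite !nrm_frame conj_mul mulKmx.
move/shifts_snormP: hX => hX v v0 Xv0.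
have Biu : invmx B \in unitmx by rewrite unitmx_inv.
rewrite !nrm_frame conj_mul; apply: hX; first exact: mulmx_unit_neq0.
by rewrite -conj_mul; apply: mulmx_unit_neq0.
Qed.

Definition dual_bounds (t r : R) (G : 'M[F]_2) := forall Y : 'M[F]_2, \tr Y = 0 ->
  (exists2 s, - r < s & shift_bounds t s Y) -> in_PF val (\tr (G *m Y)).

Lemma MPd_frame B t r G : B \in unitmx ->
  MPd val (nrm val B 0 t) r G <-> in_sl2 G /\ dual_bounds t r (mxconj B G).
Proof.
move=> Bu; split=> -[trG hG]; split => //.
  move=> Y trY [s hs hY]; set Y' := B *m Y *m invmx B.
  have MPY' : MP (nrm val B 0 t) s Y'.
    by apply/MP_frame; rewrite // /in_sl2 -(mxtrace_conj _ Bu) mxconjK.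
  have := hG Y' (ex_intro2 _ _ s hs MPY').
  by rewrite -(mxtrace_conj _ Bu) mxconjM // mxconjK.
move=> Y [s hs /(MP_frame _ _ _ Bu) [trY hY]].
rewrite -(mxtrace_conj _ Bu) mxconjM //; apply: hG; first by rewrite mxtrace_conj.
by exists s.
Qed.

Lemma MPd_plus0 (al : 'cV[F]_2 -> R) r : MPd_plus val al r 0.
Proof.
exists (r + 1); first lra.
by split=> [|Y _]; rewrite /in_sl2 ?mul0mx mxtrace0 //; left.
Qed.

Lemma shift_bounds_det1 t c h : shift_bounds t c h -> \det h = 1 -> c <= 0.
Proof.
move=> [h00 h01 h10 h11] det_h.
have : val_ge (c + c) (\det h).
  rewrite det2E; apply: val_geB; first exact: val_geM.
  by apply: (val_ge_le _ (val_geM h01 h10)); lra.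
by rewrite det_h => -[/eqP|]; rewrite ?oner_eq0 // val1 => c_le; lra.
Qed.

Lemma shift_bounds_int t h : 0 <= t < 1 -> shift_bounds t 0 h -> shift_bounds 0 0 h.
Proof.
move=> /andP[t0 t1] [h00 h01 h10 h11]; split => //; first by apply: val_ge_le h01; lra.
by have := @val_ge_int R 0 _ _ _ h10; rewrite subr0; apply; lra.
Qed.

(* The Iwahori subgroup fixes the whole edge. *)
Lemma shift_bounds_iwahori t c K : 0 <= t <= 1 -> shift_bounds 0 c K ->
  val_ge (1 + c) (K 0 1) -> shift_bounds t c K.
Proof.
move=> /andP[t0 t1] [k00 _ k10 k11] k01; split => //.
  by apply: val_ge_le k01; lra.
by apply: val_ge_le k10; lra.
Qed.

(* The (0,1) entry of an intertwiner K Gb = Ga K is read off the (0,0) entries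
   of this equation, after division by the deep entry Gb 1 0. *)
Lemma intertwiner_upper_entry (D c : R) (K Ga Gb : 'M[F]_2) :
  val_ge (1 - D) (Ga 0 0) -> val_ge (1 - D) (Ga 0 1) -> val_ge (1 - D) (Gb 0 0) ->
  Gb 1 0 != 0 -> (val (Gb 1 0))%:~R <= - D -> shift_bounds 0 c K ->
  K *m Gb = Ga *m K -> val_ge (1 + c) (K 0 1).
Proof.
move=> a00 a01 b00 b10 vb10 [k00 _ k10 _] /(congr1 (fun M : 'M[F]_2 => M 0 0)).
rewrite !mulmx2E => e00.
have -> : K 0 1 = (Ga 0 0 * K 0 0 + Ga 0 1 * K 1 0 - K 0 0 * Gb 0 0) / Gb 1 0.
  by apply: (mulIf b10); rewrite mulfVK // -e00; ring.
have num_ge : val_ge (1 - D + c) (Ga 0 0 * K 0 0 + Ga 0 1 * K 1 0 - K 0 0 * Gb 0 0).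
  apply: val_geB; [apply: val_geD|].
  - exact: val_geM a00 k00.
  - by apply: (val_ge_le _ (val_geM a01 k10)); lra.
  - by apply: (val_ge_le _ (val_geM k00 b00)); lra.
by apply: (val_ge_le _ (val_ge_divr b10 num_ge)); lra.
Qed.

Lemma invmx_comm (A G : 'M[F]_2) : A \in unitmx -> A *m G = G *m A ->
  invmx A *m G = G *m invmx A.
Proof.
move=> Au /(congr1 (fun M => invmx A *m M *m invmx A)).
by rewrite /= (mulKmx Au) !mulmxA (mulmxK Au).
Qed.

Lemma homot_mulmx_frame (al : 'cV[F]_2 -> R) B t g : B \in unitmx -> g \in unitmx ->
  homot al (nrm val B 0 t) ->
  homot (fun v => al (g *m v)) al <->
  exists c, forall w, w != 0 -> snorm t (mxconj B g *m w) = snorm t w + c.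
Proof.
move=> Bu gu [c1 h1].
have conj_mul w : invmx B *m (g *m w) = mxconj B g *m (invmx B *m w).
  by rewrite /mxconj !mulmxA (mulmxK Bu).
split=> -[c hc]; exists c.
  move=> w w0; have Bw0 := mulmx_unit_neq0 Bu w0.
  have := hc _ Bw0; rewrite !h1 ?mulmx_unit_neq0 // !nrm_frame conj_mul mulKmx //.
  by move=> e; lra.
move=> v v0; have Bv0 : invmx B *m v != 0 by apply: mulmx_unit_neq0; rewrite ?unitmx_inv.
by rewrite !h1 ?mulmx_unit_neq0 // !nrm_frame conj_mul hc //; lra.
Qed.

(* k sends e2 to a primitive vector of the kernel of N. *)
Lemma nilpotent_lower_triangularize (N : 'M[F]_2) : \tr N = 0 -> \det N = 0 ->
  exists k k', [/\ k' *m k = 1%:M, mx_val_ge 0 k, mx_val_ge 0 k'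
    & (k' *m N *m k) 0 0 = 0 /\ (k' *m N *m k) 0 1 = 0].
Proof.
move=> trN detN; set u := N 0 0; set v := N 0 1; set w := N 1 0.
have N11 : N 1 1 = - u by rewrite (mxtrace0_11 trN).
have uvw : u * u + v * w = 0.
  by move: detN; rewrite det2E N11 -/u -/v -/w => e; rewrite -oppr0 -e; ring.
have integral a b c e : val_ge (0 : R) a -> val_ge (0 : R) b ->
    val_ge (0 : R) c -> val_ge (0 : R) e -> mx_val_ge 0 (mx22 a b c e).
  by move=> ha hb hc he; apply: mx_val_geP; rewrite !mxE.
have [v0|v0] := eqVneq v 0.
  have u0 : u = 0.
    by move: uvw; rewrite v0 mul0r addr0 => /eqP; rewrite mulf_eq0 orbb => /eqP.
  exists 1%:M, 1%:M; rewrite mulmx1 mul1mx mulmx1; split => //.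
  - by move=> i j; rewrite mxE; case: (i == j); [apply: val_ge1|left].
  - by move=> i j; rewrite mxE; case: (i == j); [apply: val_ge1|left].
have [/andP[u0 lt_uv]|le_vu] := boolP ((u != 0) && (val u < val v)).
  set X := - v / u.
  have hX : val_ge (0 : R) X.
    apply: val_ge_le (val_ge_divr u0 (val_geN (or_intror (lexx _)))).
    by rewrite subr_ge0 ler_int ltW.
  exists (mx22 1 X 0 1), (mx22 1 (- X) 0 1); split.
  - by apply: matrix2P; rewrite !mulmx2E !mxE /=; ring.
  - by apply: integral => //; [apply: val_ge1|left|apply: val_ge1].
  - by apply: integral => //; [apply: val_ge1|apply: val_geN|left|apply: val_ge1].
  split.
    transitivity ((u * u + v * w) / u); last by rewrite uvw mul0r.
    by rewrite !mulmx2E !mxE /= N11 -/u -/v -/w /X; field.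
  transitivity (- (u * u + v * w) * v / (u * u)); last by rewrite uvw oppr0 !mul0r.
  by rewrite !mulmx2E !mxE /= N11 -/u -/v -/w /X; field.
set Y := - u / v.
have hY : val_ge (0 : R) Y.
  have [u0|u0] := eqVneq u 0; first by rewrite /Y u0 oppr0 mul0r; left.
  apply: val_ge_le (val_ge_divr v0 (val_geN (or_intror (lexx _)))).
  by move: le_vu; rewrite u0 /= -leNgt subr_ge0 ler_int.
exists (mx22 0 1 1 Y), (mx22 (- Y) 1 1 0); split.
- by apply: matrix2P; rewrite !mulmx2E !mxE /=; ring.
- by apply: integral => //; [left|apply: val_ge1|apply: val_ge1].
- by apply: integral => //; [apply: val_geN|apply: val_ge1|apply: val_ge1|left].
split; first by rewrite !mulmx2E !mxE /= N11 -/u -/v -/w /Y; field.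
transitivity ((u * u + v * w) / v); last by rewrite uvw mul0r.
by rewrite !mulmx2E !mxE /= N11 -/u -/v -/w /Y; field.
Qed.
Section Uniformizer.
Variable pi : F.
Hypotheses (pi0 : pi != 0) (val_pi : val pi = 1).
Hypotheses (two0 : (2 : F) != 0) (val2 : val 2 = 0).

Lemma val_expz (n : int) : val (pi ^ n) = n.
Proof.
have val_exprn k : val (pi ^+ k) = k.
  elim: k => [|k IH]; first by rewrite expr0 val1.
  by rewrite exprS valM ?expf_neq0 // IH val_pi; lia.
by case: n => k; rewrite /= ?valV ?expf_neq0 // val_exprn // NegzE.
Qed.

Lemma val_ge_mulpi (y : R) a : val_ge y (pi * a) <-> val_ge (y - 1) a.
Proof.
have [->|a0] := eqVneq a 0; first by rewrite mulr0; split => _; left.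
have pia0 : pi * a != 0 by rewrite mulf_neq0.
rewrite /val_ge valM // val_pi intrD.
by split=> -[/eqP|h]; rewrite ?(negbTE pia0) ?(negbTE a0) //; right; lra.
Qed.

Lemma dual_bounds_diag t r G (n : int) : \tr G = 0 -> dual_bounds t r G ->
  - r < n%:~R -> val_ge (1 - n%:~R : R) (G 0 0).
Proof.
move=> trG hG hn; set e := pi ^ n.
have e0 : e != 0 by exact: expfz_neq0.
have /(@PF_val_ge R) : in_PF val (\tr (G *m mx22 e 0 0 (- e))).
  apply: hG; first by rewrite mxtrace2E !mxE /= subrr.
  exists n%:~R => //; split; rewrite !mxE /=; try by left.
    by right; rewrite val_expz.
  by apply/val_geN; right; rewrite val_expz.
rewrite mxtrace2E !mulmx2E !mxE /= (mxtrace0_11 trG).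
have -> : G 0 0 * e + G 0 1 * 0 + (G 1 0 * 0 + - G 0 0 * - e) = G 0 0 * (2 * e).
  by ring.
move/(val_ge_divr (mulf_neq0 two0 e0)); rewrite mulfK ?mulf_neq0 //.
by rewrite valM // val2 val_expz add0r.
Qed.

Lemma dual_bounds_upper t r G (n : int) : 0 <= t -> dual_bounds t r G ->
  - r < n%:~R -> val_ge (1 - n%:~R : R) (G 0 1).
Proof.
move=> t0 hG hn; set e := pi ^ n.
have e0 : e != 0 by exact: expfz_neq0.
have /(@PF_val_ge R) : in_PF val (\tr (G *m mx22 0 0 e 0)).
  apply: hG; first by rewrite mxtrace2E !mxE /= addr0.
  exists n%:~R => //; split; rewrite !mxE /=; try by left.
  by right; rewrite val_expz; lra.
rewrite mxtrace2E !mulmx2E !mxE /=.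
have -> : G 0 0 * 0 + G 0 1 * e + (G 1 0 * 0 + G 1 1 * 0) = G 0 1 * e by ring.
by move/(val_ge_divr e0); rewrite mulfK // val_expz.
Qed.

Lemma dual_bounds_lower t r G (n m : int) : dual_bounds t r G ->
  - r < n%:~R -> n%:~R + t <= m%:~R -> val_ge (1 - m%:~R : R) (G 1 0).
Proof.
move=> hG hn hm; set e := pi ^ m.
have e0 : e != 0 by exact: expfz_neq0.
have /(@PF_val_ge R) : in_PF val (\tr (G *m mx22 0 e 0 0)).
  apply: hG; first by rewrite mxtrace2E !mxE /= addr0.
  exists n%:~R => //; split; rewrite !mxE /=; try by left.
  by right; rewrite val_expz.
rewrite mxtrace2E !mulmx2E !mxE /=.
have -> : G 0 0 * 0 + G 0 1 * 0 + (G 1 0 * e + G 1 1 * 0) = G 1 0 * e by ring.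
by move/(val_ge_divr e0); rewrite mulfK // val_expz.
Qed.

Lemma dual_bounds_of_entries t r G al be ga : \tr G = 0 ->
  val_ge al (G 0 0) -> val_ge be (G 0 1) -> val_ge ga (G 1 0) ->
  r <= al -> r + t <= be -> r - t <= ga -> dual_bounds t r G.
Proof.
move=> trG g00 g01 g10 h1 h2 h3 Y trY [s hs [y00 y01 y10 y11]].
rewrite mxtrace2E !mulmx2E (mxtrace0_11 trG).
apply: (@val_ge_PF R 1); first lra.
have ge1 r' a : 0 < r' -> val_ge r' a -> val_ge 1 a.
  by move=> r0 /(val_ge_PF r0) /PF_val_ge.
apply/val_geD; apply/val_geD.
- by apply: ge1 (val_geM g00 y00); lra.
- by apply: ge1 (val_geM g01 y10); lra.
- by apply: ge1 (val_geM g10 y01); lra.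
- by apply: ge1 (val_geM (val_geN g00) y11); lra.
Qed.

Lemma dual_bounds0_entries r G (n : int) : \tr G = 0 -> dual_bounds 0 r G ->
  - r < n%:~R -> mx_val_ge (1 - n%:~R) G.
Proof.
move=> trG hG hn; have g00 := dual_bounds_diag trG hG hn.
apply: mx_val_geP => //; last by rewrite (mxtrace0_11 trG); apply: val_geN.
  exact: dual_bounds_upper (lexx 0) hG hn.
by apply: dual_bounds_lower hG hn _; rewrite addr0.
Qed.

Lemma snorm_swap s w : w != 0 -> snorm s (mx22 0 pi 1 0 *m w) = snorm (1 - s) w + s.
Proof.
move=> w0; set W := mx22 0 pi 1 0 *m w.
have W0 : W 0 0 = pi * w 1 0 by rewrite mulmx2E !mxE /=; ring.
have W1 : W 1 0 = w 0 0 by rewrite mulmx2E !mxE /=; ring.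
have Wn0 : W != 0.
  apply: contraNneq w0 => W_eq0; apply/eqP/col2_eq0; first by rewrite -W1 W_eq0 mxE.
  by apply/eqP; move: W0; rewrite W_eq0 mxE => /esym/eqP; rewrite mulf_eq0 (negbTE pi0).
apply: le_anti; apply/andP; split.
  suff : snorm s W - s <= snorm (1 - s) w by lra.
  apply/(snorm_ge _ _ w0); have [h0 h1] := (snorm_ge _ _ Wn0).1 (lexx (snorm s W)).
  rewrite W0 val_ge_mulpi W1 in h0 h1.
  by split; [apply: val_ge_le h1; lra|apply: val_ge_le h0; lra].
rewrite (snorm_ge _ _ Wn0) W0 W1 val_ge_mulpi.
have [h0 h1] := (snorm_ge _ _ w0).1 (lexx (snorm (1 - s) w)).
by split; [apply: val_ge_le h1; lra|apply: val_ge_le h0; lra].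
Qed.

Lemma chamber_of_swap B : B \in unitmx -> exists B', [/\ B' \in unitmx,
  (forall v, v != 0 -> nrm val B' (0 : R) 0 v = nrm val B 0 1 v) &
  (forall z : 'cV[F]_2 -> R, chamber_of val B z <-> chamber_of val B' z)].
Proof.
move=> Bu; set S := mx22 0 1 pi^-1 0; set S' := mx22 0 pi 1 0.
have SS' : S' *m S = 1%:M.
  by apply: matrix2P; rewrite !mulmx2E !mxE /= ?mulfV //; ring.
have Su : S \in unitmx by case: (mulmx1_unit SS').
have swap (t : R) v : v != 0 -> nrm val (B *m S) 0 t v = nrm val B 0 (1 - t) v + t.
  move=> v0; rewrite !nrm_frame invmxM // (invmx_left SS') -mulmxA snorm_swap //.
  by apply: mulmx_unit_neq0; rewrite ?unitmx_inv.
exists (B *m S); split; first by rewrite unitmx_mul Bu Su.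
  by move=> v v0; rewrite swap // subr0 addr0.
move=> z; split=> -[t [/andP[t0 t1] hz]]; exists (1 - t).
  split; first by apply/andP; split; lra.
  apply: (homot_trans hz); exists (t - 1) => v v0.
  by rewrite swap // (_ : 1 - (1 - t) = t); ring.
split; first by apply/andP; split; lra.
by apply: (homot_trans hz); exists t => v v0; rewrite swap.
Qed.

Lemma depth_int (x : 'cV[F]_2 -> R) (d : R) Gam : is_vertex val x ->
  MPd val x (- d) Gam -> ~ MPd_plus val x (- d) Gam -> exists D : int, d = D%:~R.
Proof.
move=> [B [Bu hB]] hG1 hG2; exists (Num.floor d).
have d_ge := real_floor_le (num_real d); have d_lt := real_floorD1_gt (num_real d).
have /(MPd_frame _ _ _ Bu) [trG hG] := MPd_homot hB hG1.
have trc : \tr (mxconj B Gam) = 0 by rewrite mxtrace_conj.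
have hn : - - d < (Num.floor d + 1)%:~R by lra.
have /(_ 0 0) g00 := dual_bounds0_entries trc hG hn.
have /(_ 0 1) g01 := dual_bounds0_entries trc hG hn.
have /(_ 1 0) g10 := dual_bounds0_entries trc hG hn.
rewrite intrD in g00 g01 g10 d_lt.
apply/eqP; rewrite eq_le d_ge andbT leNgt; apply/negP => lt_d.
apply: hG2; exists (- (Num.floor d)%:~R); first lra.
apply/(MPd_homot (homot_sym hB))/(MPd_frame _ _ _ Bu); split => //.
by apply: (dual_bounds_of_entries trc g00 g01 g10); lra.
Qed.

Section Chamber.
Variables (x : 'cV[F]_2 -> R) (D : int) (Gam : 'M[F]_2).
Local Notation d := (D%:~R : R).
Hypotheses (hG1 : MPd val x (- d) Gam) (hG2 : ~ MPd_plus val x (- d) Gam).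

Definition vertex_frame B := B \in unitmx /\ homot x (nrm val B 0 0).

(* In such a frame the chamber {[nrm B 0 t] | 0 < t < 1} is C_Gamma. *)
Definition adapted_frame B := [/\ vertex_frame B,
  val_ge (1 - d) (mxconj B Gam 0 0) & val_ge (1 - d) (mxconj B Gam 0 1)].

Lemma trGam : \tr Gam = 0. Proof. by case: hG1. Qed.

Lemma vertex_frame_dual B s G : vertex_frame B -> MPd val x s G ->
  \tr (mxconj B G) = 0 /\ dual_bounds 0 s (mxconj B G).
Proof.
move=> [Bu hB] /(MPd_homot hB) /(MPd_frame _ _ _ Bu) [trG hG].
by rewrite mxtrace_conj.
Qed.

Lemma vertex_frame_Gam_ge B : vertex_frame B -> mx_val_ge (- d) (mxconj B Gam).
Proof.
move=> fB; have [trG hG] := vertex_frame_dual fB hG1.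
have hn : - - d < (D + 1)%:~R by rewrite intrD; lra.
have -> : - d = 1 - (D + 1)%:~R by rewrite intrD; ring.
exact: dual_bounds0_entries trG hG hn.
Qed.

Lemma vertex_frame_Gam_shallow B : vertex_frame B ->
  ~ [/\ val_ge (1 - d) (mxconj B Gam 0 0), val_ge (1 - d) (mxconj B Gam 0 1)
      & val_ge (1 - d) (mxconj B Gam 1 0)].
Proof.
move=> [Bu hB] [g00 g01 g10]; apply: hG2; exists (1 - d); first lra.
apply/(MPd_homot (homot_sym hB))/(MPd_frame _ _ _ Bu); split; first exact: trGam.
by apply: (dual_bounds_of_entries _ g00 g01 g10); rewrite ?mxtrace_conj ?trGam //; lra.
Qed.

Lemma adapted_frame_lower B : adapted_frame B ->
  mxconj B Gam 1 0 != 0 /\ (val (mxconj B Gam 1 0))%:~R <= - d.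
Proof.
move=> [fB g00 g01]; apply: val_le_of_not_ge => g10.
exact: vertex_frame_Gam_shallow fB (And3 g00 g01 g10).
Qed.

(* The frame change between two adapted frames lies in the Iwahori subgroup. *)
Lemma adapted_frames_translate B1 B2 t : adapted_frame B1 -> adapted_frame B2 ->
  0 <= t <= 1 ->
  exists c, forall w, w != 0 -> snorm t (invmx B2 *m B1 *m w) = snorm t w + c.
Proof.
move=> ad1 ad2 t01; have [[u1 h1] a00 a01] := ad1; have [[u2 h2] b00 b01] := ad2.
set H := invmx B2 *m B1.
have Hu : H \in unitmx by rewrite unitmx_mul unitmx_inv u1 u2.
have [c hc] := homot_trans (homot_sym h2) h1.
have /(snorm_translateP _ _ Hu) [e1 e2] :
    forall w, w != 0 -> snorm 0 (H *m w) = snorm 0 w + c.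
  move=> w w0; have := hc _ (mulmx_unit_neq0 u1 w0).
  by rewrite !nrm_frame (mulKmx u1) /H -mulmxA.
have [nz1 vb1] := adapted_frame_lower ad1; have [nz2 vb2] := adapted_frame_lower ad2.
have r1 : H *m mxconj B1 Gam = mxconj B2 Gam *m H.
  by rewrite /H /mxconj !mulmxA (mulmxK u1) (mulmxK u2).
have r2 : invmx H *m mxconj B2 Gam = mxconj B1 Gam *m invmx H.
  by rewrite /H invmxM ?unitmx_inv // invmxK /mxconj !mulmxA (mulmxK u1) (mulmxK u2).
exists c; apply/(snorm_translateP _ _ Hu); split; apply: shift_bounds_iwahori => //.
- exact: intertwiner_upper_entry b00 b01 a00 nz1 vb1 e1 r1.
- exact: intertwiner_upper_entry a00 a01 b00 nz2 vb2 e2 r2.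
Qed.

Lemma adapted_chamber_of B1 B2 (z : 'cV[F]_2 -> R) :
  adapted_frame B1 -> adapted_frame B2 -> chamber_of val B2 z -> chamber_of val B1 z.
Proof.
move=> ad1 ad2 [t [t01 hz]]; exists t; split => //.
have [[u1 _] _ _] := ad1.
have t01' : 0 <= t <= 1 by case/andP: t01 => t0 t1; apply/andP; split; lra.
have [c hc] := adapted_frames_translate ad1 ad2 t01'.
apply: (homot_trans hz); exists c => v v0.
have w0 : invmx B1 *m v != 0 by apply: mulmx_unit_neq0; rewrite ?unitmx_inv.
by rewrite !nrm_frame -hc // -!mulmxA (mulKVmx u1).
Qed.

Lemma adapted_chamber_depth B Gam' (z : 'cV[F]_2 -> R) : adapted_frame B ->
  MPd_plus val x (- d) (Gam' - Gam) -> chamber_of val B z ->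
  MPd val x (- d) Gam' /\ MPd_plus val z (- d) Gam'.
Proof.
move=> [fB a00 a01] [s hs hE] [t [/andP[t0 t1] hz]]; have [Bu hB] := fB.
have [trE hE'] := vertex_frame_dual fB hE.
have E_ge : mx_val_ge (1 - d) (mxconj B (Gam' - Gam)).
  by apply: dual_bounds0_entries trE hE' _; lra.
have G_ge := vertex_frame_Gam_ge fB.
have eGm : mxconj B Gam' = mxconj B Gam + mxconj B (Gam' - Gam).
  by rewrite mxconjB addrC subrK.
have eG' i j : mxconj B Gam' i j = mxconj B Gam i j + mxconj B (Gam' - Gam) i j.
  by rewrite eGm mxE.
have trG' : \tr (mxconj B Gam') = 0.
  by rewrite eGm mxtraceD trE mxtrace_conj // trGam addr0.
have sl2G' : in_sl2 Gam' by rewrite /in_sl2 -(mxtrace_conj _ Bu).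
have c00 : val_ge (1 - d) (mxconj B Gam' 0 0) by rewrite eG'; apply: val_geD.
have c01 : val_ge (1 - d) (mxconj B Gam' 0 1) by rewrite eG'; apply: val_geD.
have c10 : val_ge (- d) (mxconj B Gam' 1 0).
  by rewrite eG'; apply: val_geD (G_ge 1 0) (val_ge_le _ (E_ge 1 0)); lra.
split.
  apply/(MPd_homot (homot_sym hB))/(MPd_frame _ _ _ Bu); split => //.
  by apply: (dual_bounds_of_entries trG' c00 c01 c10); lra.
set u := Num.min t (1 - t).
have u_t : u <= t by rewrite ge_min lexx.
have u_1t : u <= 1 - t by rewrite ge_min lexx orbT.
exists (- d + u); first by rewrite ltrDl lt_min; apply/andP; split; lra.
apply/(MPd_homot (homot_sym hz))/(MPd_frame _ _ _ Bu); split => //.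
by apply: (dual_bounds_of_entries trG' c00 c01 c10); lra.
Qed.

Lemma adapted_cent B (z : 'cV[F]_2 -> R) g : adapted_frame B -> chamber_of val B z ->
  in_cent x Gam g <-> in_cent z Gam g.
Proof.
move=> adB [t [/andP[t0 t1] hz]]; have [[Bu hB] a00 a01] := adB.
have [nz vb] := adapted_frame_lower adB.
suff stab_iff : \det g = 1 -> g *m Gam *m invmx g = Gam ->
    homot (fun v => x (g *m v)) x <-> homot (fun v => z (g *m v)) z.
  by split=> -[[dg hs] hc]; split => //; split => //; apply/(stab_iff dg hc).
move=> dg hc; have gu : g \in unitmx by rewrite unitmxE dg unitr1.
set h := mxconj B g; set G := mxconj B Gam.
have hu : h \in unitmx by rewrite !unitmx_mul unitmx_inv Bu gu.
have hG : h *m G = G *m h by rewrite -!mxconjM // -{2}hc mulmxKV.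
have dh : \det h = 1 by rewrite det_conj.
have dhi : \det (invmx h) = 1 by rewrite det_inv dh invr1.
rewrite (homot_mulmx_frame Bu gu hB) (homot_mulmx_frame Bu gu hz).
split=> -[c /(snorm_translateP _ _ hu) [e1 e2]].
  have t01 : 0 <= t <= 1 by apply/andP; split; lra.
  exists c; apply/(snorm_translateP _ _ hu); split; apply: shift_bounds_iwahori => //.
  - exact: (intertwiner_upper_entry a00 a01 a00 nz vb e1 hG).
  - exact: (intertwiner_upper_entry a00 a01 a00 nz vb e2 (invmx_comm hu hG)).
(* An element of SL2 cannot shift a norm by a nonzero constant. *)
have c0 : c = 0 by have := shift_bounds_det1 e1 dh; have := shift_bounds_det1 e2 dhi; lra.
rewrite c0 oppr0 in e1 e2.
have t01 : 0 <= t < 1 by apply/andP; split; lra.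
exists 0; apply/(snorm_translateP _ _ hu); rewrite oppr0.
by split; apply: shift_bounds_int t01 _.
Qed.

Lemma adapted_frame_mulmx B k k' : vertex_frame B -> k' *m k = 1%:M ->
  mx_val_ge 0 k -> mx_val_ge 0 k' ->
  val_ge (1 - d) ((k' *m mxconj B Gam *m k) 0 0) ->
  val_ge (1 - d) ((k' *m mxconj B Gam *m k) 0 1) -> adapted_frame (B *m k).
Proof.
move=> [Bu hB] kk' hk hk' g00 g01; have [k'u ku] := mulmx1_unit kk'.
have ik := invmx_left kk'.
rewrite /adapted_frame mxconj_mulmx // ik; split => //; split.
  by rewrite unitmx_mul Bu ku.
have int_shift M : mx_val_ge 0 M -> shift_bounds 0 0 M.
  by move=> hM; split; rewrite ?addr0 ?subr0; apply: hM.
have k'_fix : forall w, w != 0 -> snorm 0 (k' *m w) = snorm 0 w + 0.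
  apply/(snorm_translateP _ _ k'u); rewrite oppr0 (invmx_left (mulmx1C kk')).
  by split; apply: int_shift.
apply: (homot_trans hB); exists 0 => v v0; rewrite !nrm_frame invmxM // ik -mulmxA.
by rewrite k'_fix ?addr0 //; apply: mulmx_unit_neq0; rewrite ?unitmx_inv.
Qed.

Lemma exists_adapted_frame : is_vertex val x ->
  (exists N, nilpotent_sl2 N /\ MPd_plus val x (- d) (N - Gam)) ->
  exists B, adapted_frame B.
Proof.
move=> [B fB] [N [[trN [n Nn]] [s hs hE]]]; have [Bu _] := fB.
have [trE hE'] := vertex_frame_dual fB hE.
have E_ge : mx_val_ge (1 - d) (mxconj B (N - Gam)).
  by apply: dual_bounds0_entries trE hE' _; lra.
have detN : \det N = 0.
  case: n Nn => [|n] Nn.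
    move/matrixP/(_ 0 0): Nn; rewrite expr0 !mxE /= => /eqP.
    by rewrite oner_eq0.
  have := det_expr N n.+1; rewrite Nn det0 => /esym/eqP.
  by rewrite expf_eq0 => /andP[_ /eqP].
have trN1 : \tr (mxconj B N) = 0 by rewrite mxtrace_conj.
have detN1 : \det (mxconj B N) = 0 by rewrite det_conj.
have [k [k' [kk' hk hk' [z00 z01]]]] := nilpotent_lower_triangularize trN1 detN1.
have eG : mxconj B Gam = mxconj B N - mxconj B (N - Gam).
  by rewrite mxconjB opprB addrC subrK.
have kEk := mx_val_geM (mx_val_geM hk' E_ge) hk.
have entB (A A' : 'M[F]_2) i j : (A - A') i j = A i j - A' i j by rewrite !mxE.
exists (B *m k); apply: (adapted_frame_mulmx fB kk' hk hk').
all: rewrite eG mulmxBr mulmxBl entB ?z00 ?z01 sub0r.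
- by apply/val_geN/(val_ge_le _ (kEk 0 0)); lra.
- by apply/val_geN/(val_ge_le _ (kEk 0 1)); lra.
Qed.

Lemma adapted_frame_of_chamber B : vertex_frame B ->
  (forall z, chamber_of val B z -> MPd_plus val z (- d) Gam) -> adapted_frame B.
Proof.
move=> fB hC; have [Bu _] := fB.
have [s hs /(MPd_frame _ _ _ Bu) [_ hG]] : MPd_plus val (nrm val B 0 (1 / 2)) (- d) Gam.
  by apply: hC; exists (1 / 2); split; [apply/andP; split; lra|exact: homot_refl].
have trG : \tr (mxconj B Gam) = 0 by rewrite mxtrace_conj // trGam.
by split => //; [apply: dual_bounds_diag trG hG _|apply: dual_bounds_upper _ hG _]; lra.
Qed.

Lemma adjacent_vertex_frame C : adjacent val C x ->
  exists B, vertex_frame B /\ forall z, C z <-> chamber_of val B z.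
Proof.
move=> [B [Bu hC [hx|hx]]]; first by exists B.
have [B' [B'u hB' hBB']] := chamber_of_swap Bu.
exists B'; split; last by move=> z; rewrite hC hBB'.
by split => //; apply: (homot_trans hx); exists 0 => v v0; rewrite hB' // addr0.
Qed.

Lemma chamber_Gam : is_vertex val x ->
  (exists N, nilpotent_sl2 N /\ MPd_plus val x (- d) (N - Gam)) ->
  exists C : ('cV[F]_2 -> R) -> Prop,
    [/\ is_chamber val C, adjacent val C x,
        (forall z, C z -> MPd val x (- d) Gam /\ MPd_plus val z (- d) Gam),
        (forall C' : ('cV[F]_2 -> R) -> Prop, is_chamber val C' -> adjacent val C' x ->
           (forall z, C' z -> MPd val x (- d) Gam /\ MPd_plus val z (- d) Gam) ->
           forall z, C' z <-> C z) &
        ((forall Gam', MPd_plus val x (- d) (Gam' - Gam) ->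
           forall z, C z -> MPd val x (- d) Gam' /\ MPd_plus val z (- d) Gam') /\
        (forall z, C z -> forall g, in_cent x Gam g <-> in_cent z Gam g))].
Proof.
move=> hx hnil; have [B0 ad0] := exists_adapted_frame hx hnil.
have [[B0u hB0] _ _] := ad0.
exists (chamber_of val B0); split.
- by exists B0.
- by exists B0; split => //; left.
- move=> z hz; apply: (adapted_chamber_depth ad0 _ hz).
  by rewrite subrr; apply: MPd_plus0.
- move=> C' _ /adjacent_vertex_frame [B [fB hC']] hdepth z.
  have adB : adapted_frame B.
    by apply: adapted_frame_of_chamber fB _ => z' /hC' /hdepth [].
  by rewrite hC'; split; apply: adapted_chamber_of.
- split=> [Gam' hGam' z hz|z hz g]; first exact: adapted_chamber_depth ad0 hGam' hz.
  exact: adapted_cent ad0 hz.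
Qed.

End Chamber.
End Uniformizer.
End BruhatTitsTree.

Theorem mainTheorem5 (F : fieldType) (val : F -> int) (p : nat)
  (HF : nonarch_local_field val p) (R : realType)
  (x : 'cV[F]_2 -> R) (hx : is_vertex val x)
  (d : R) (hd : 0 < d) (Gam : 'M[F]_2)
  (hG1 : MPd val x (- d) Gam) (hG2 : ~ MPd_plus val x (- d) Gam)
  (hnil : exists N, nilpotent_sl2 N /\ MPd_plus val x (- d) (N - Gam)) :
  exists C : ('cV[F]_2 -> R) -> Prop,
    [/\ is_chamber val C, adjacent val C x,
        (forall z, C z -> MPd val x (- d) Gam /\ MPd_plus val z (- d) Gam),
        (forall C' : ('cV[F]_2 -> R) -> Prop, is_chamber val C' -> adjacent val C' x ->
           (forall z, C' z -> MPd val x (- d) Gam /\ MPd_plus val z (- d) Gam) ->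
           forall z, C' z <-> C z) &
        ((forall Gam', MPd_plus val x (- d) (Gam' - Gam) ->
           forall z, C z -> MPd val x (- d) Gam' /\ MPd_plus val z (- d) Gam') /\
        (forall z, C z -> forall g, in_cent x Gam g <-> in_cent z Gam g))].
Proof.
have [valM val_addr [pi [pi0 val_pi]] [_ _ [pp p3 pPF]]] := HF.
have [two0 val2] := two_unit valM val_addr pp p3 pPF.
have [D d_eq] := depth_int valM val_addr pi0 val_pi two0 val2 hx hG1 hG2.
rewrite d_eq in hG1 hG2 hnil *.
exact: (chamber_Gam valM val_addr pi0 val_pi two0 val2 hG1 hG2 hx hnil).
Qed.
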